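(* Let $R\subseteq\mathbb{R}^2$ be open and let $f:R\to\mathbb{R}^2$ be $C^1$. Let $R_0$ be a connected component of $R\setminus f^{-1}(f(S)\cup C(f))$, choose $z_0\in R_0$, let $w_0=f(z_0)$, and let $\Omega_0$ be the connected component of $\mathbb{R}^2\setminus(f(S)\cup C(f))$ containing $w_0$. Then $f(R_0)=\Omega_0$.
   Context: Write $f=(u,v)$; $J_f=u_xv_y-u_yv_x$ and $S=\{z\in R: J_f(z)=0\}$. $C(f)$ is the set of finite points $\zeta\in\mathbb{R}^2$ for which there is a sequence $(z_n)\subset R$ converging to a point of $\partial R$ or with $|z_n|\to\infty$, such that $f(z_n)\to\zeta$. *)

From HB Require Import structures.
From mathcomp Require Import all_boot all_order all_algebra.
From mathcomp Require Import all_classical all_reals all_analysis.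
Set Implicit Arguments. Unset Strict Implicit. Unset Printing Implicit Defensive.
Import Order.TTheory GRing.Theory Num.Theory.
Import numFieldNormedType.Exports.
Local Open Scope classical_set_scope.
Local Open Scope ring_scope.

Definition e1 {R : realType} : R * R := (1, 0).
Definition e2 {R : realType} : R * R := (0, 1).

Definition C1_on {R : realType} (D : set (R * R)) (f : R * R -> R * R) : Prop :=
  (forall z, D z -> derivable f z e1 /\ derivable f z e2) /\
  {within D, continuous (fun z => 'D_e1 f z)} /\
  {within D, continuous (fun z => 'D_e2 f z)}.

Definition jacobian {R : realType} (f : R * R -> R * R) (z : R * R) : R :=
  ('D_e1 f z).1 * ('D_e2 f z).2 - ('D_e2 f z).1 * ('D_e1 f z).2.

Definition critset {R : realType} (D : set (R * R)) (f : R * R -> R * R) : set (R * R) :=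
  [set z | D z /\ jacobian f z = 0].

Definition clusterset {R : realType} (D : set (R * R)) (f : R * R -> R * R) : set (R * R) :=
  [set zeta | exists zn : nat -> R * R,
     (forall n, D (zn n)) /\
     ((exists p, closure D p /\ ~ D p /\ zn @ \oo --> p) \/
      ((fun n => `|zn n|) @ \oo --> +oo)) /\
     (f \o zn) @ \oo --> zeta].

(* Where the Jacobian does not vanish, f is locally expanding, so for w close
   to f z the minimum of |f - w|^2 over a small closed ball around z is attained
   in its interior; both partial derivatives of |f - w|^2 vanish there, and the
   invertibility of the Jacobian forces f = w.  Hence f maps open sets avoiding
   S onto open sets, and f(R0) is open.  It is also closed in the complement of
   B = f(S) u C(f): if f(z_n) -> w with z_n in R0 and w not in B, then (z_n)
   neither escapes to infinity nor accumulates at the boundary of R (either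
   would put w in C(f)), so a subsequence converges to some p in R with
   f(p) = w, and p lies in R0 because the components of an open subset of the
   plane are open.  As Omega0 is connected, f(R0) = Omega0.  The same
   accumulation argument shows that B is closed. *)

From Pilot Require Import Defs.
From HB Require Import structures.
From mathcomp Require Import all_boot all_order all_algebra.
From mathcomp Require Import all_classical all_reals all_analysis.
From mathcomp Require Import ring lra.
Import Order.TTheory GRing.Theory Num.Theory.
Import numFieldNormedType.Exports.
Local Open Scope classical_set_scope.
Local Open Scope ring_scope.

Lemma cvgn_oo_ge_id (phi : nat -> nat) :
  (forall n, (n <= phi n)%N) -> phi @ \oo --> \oo.
Proof.
by move=> phi_ge; apply/cvgnyPge => N; exists N => // n /= /leq_trans; apply.
Qed.

Section normed_module.
Context {R : realType} {V : normedModType R}.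
Implicit Types (u : nat -> V) (U : set V).

Lemma cvg_natSinv u l : (forall n, `|u n - l| < n.+1%:R^-1) -> u @ \oo --> l.
Proof.
move=> ul; apply/cvgrPdist_lt => e e0; near=> n.
rewrite distrC (lt_trans (ul n)) //; near: n.
exact: (near_infty_natSinv_lt (PosNum e0)).
Unshelve. all: end_near. Qed.

Lemma cluster_subseq u p : cluster (u @ \oo) p ->
  exists2 phi : nat -> nat, phi @ \oo --> \oo & u \o phi @ \oo --> p.
Proof.
move=> up.
have near_p n : exists m, (n <= m)%N /\ `|u m - p| < n.+1%:R^-1.
  have [|_ [[m nm <-]]] := up [set u m | m in [set m | (n <= m)%N]] _ _
    (nbhsx_ballx p _ (harmonic_gt0 n)); first by exists n => // m nm; exists m.
  by rewrite -ball_normE /= distrC; exists m.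
have [phi /all_and2[nphi uphi]] := choice near_p.
by exists phi; [exact: cvgn_oo_ge_id | exact: cvg_natSinv].
Qed.

Lemma closure_image_cvg {T : Type} (f : T -> V) (A : set T) w :
  closure (f @` A) w ->
  exists z : nat -> T, (forall n, A (z n)) /\ f \o z @ \oo --> w.
Proof.
move=> Aw.
have near_w n : exists z, A z /\ `|f z - w| < n.+1%:R^-1.
  have [_ [[z Az <-]]] := Aw _ (nbhsx_ballx w _ (harmonic_gt0 n)).
  by rewrite -ball_normE /= distrC; exists z.
have [z /all_and2[Az fz]] := choice near_w.
by exists z; split => //; apply: cvg_natSinv.
Qed.

Lemma ball_connected (p : V) (r : R) : connected (ball p r).
Proof.
set seg := fun y => (fun t : R => p + t *: (y - p)) @` `[0, 1].
have -> : ball p r = \bigcup_(y in ball p r) seg y.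
  apply/seteqP; split => [y py | _ [y py [t t01 <-]]].
    exists y => //; exists 1; first by rewrite /= in_itv /= lexx ler01.
    by rewrite scale1r addrC subrK.
  move: t01 py; rewrite /= in_itv /= -!ball_normE /= => /andP[t0 t1].
  rewrite opprD addrA subrr sub0r normrN normrZ ger0_norm // distrC.
  by apply: le_lt_trans; rewrite ler_piMl.
apply: bigcup_connected.
  exists p => y _; exists 0; first by rewrite /= in_itv /= lexx ler01.
  by rewrite scale0r addr0.
move=> y _; apply: connected_continuous_connected; first exact: segment_connected.
apply: continuous_subspaceT => t.
by apply: cvgD; [exact: cvg_cst | exact: scalel_continuous].
Qed.

Lemma open_connected_component U x : open U -> open (connected_component U x).
Proof.
rewrite !openE => oU y Cy.
have /nbhs_ballP[r r0 rU] := oU y (connected_component_sub Cy).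
apply/nbhs_ballP; exists r => // z yz; rewrite (same_connected_component Cy).
exact: (connected_component_max (ballxx y r0) rU (ball_connected y r)).
Qed.

Lemma connected_component_closure U x p : open U -> U p ->
  closure (connected_component U x) p -> connected_component U x p.
Proof.
move=> oU Up /(_ _ (open_nbhs_nbhs (conj (open_connected_component U p oU)
  (connected_component_refl Up)))) [y [xy py]].
exact: connected_component_trans xy (connected_component_sym py).
Qed.

End normed_module.

Lemma connected_sub_relclopen {T : topologicalType} (A W : set T) :
  connected A -> A `&` W !=set0 -> open W -> A `&` closure W `<=` W -> A `<=` W.
Proof.
move=> cA AW oW AclW; suff <- : A `&` W = A by move=> x [].
apply: cA => //; first by exists W.
exists (closure W); first exact: closed_closure.
apply/seteqP; split => x [Ax Wx]; split => //; first exact: subset_closure.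
exact: AclW.
Qed.

Lemma open_setD_preimage {T U : topologicalType} (D : set T) (f : T -> U)
    (B : set U) : open D -> (forall z, D z -> f @ z --> f z) -> closed B ->
  open (D `\` f @^-1` B).
Proof.
move=> oD fcont cB; rewrite openE => z [Dz nBz].
have zD : nbhs z D by apply: open_nbhs_nbhs.
have zB : nbhs z (f @^-1` ~` B).
  by apply: (fcont z Dz); apply: open_nbhs_nbhs; split => //; exact: closed_openC.
by apply: filterS (filterI zD zB) => y [].
Qed.

Section plane_sequences.
Context {R : realType}.
Implicit Types (u : nat -> R * R).

Lemma closed_ball_compact_pair (z : R * R) (r : R) :
  0 < r -> compact (closed_ball z r).
Proof.
move=> r0; have -> : closed_ball z r = closed_ball z.1 r `*` closed_ball z.2 r.
  rewrite !closed_ballE //; apply/seteqP; split => y /=; rewrite /closed_ball_ /=.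
    by rewrite [X in X <= _]prod_normE ge_max => /andP.
  by move=> [z1y z2y]; rewrite [X in X <= _]prod_normE ge_max z1y.
by apply: compact_setX; exact: closed_ballR_compact.
Qed.

Lemma not_cvgy_subseq u : ~ ((fun n => `|u n|) @ \oo --> +oo) ->
  exists (p : R * R) (phi : nat -> nat), phi @ \oo --> \oo /\ u \o phi @ \oo --> p.
Proof.
move=> /cvgryPge/existsNP[M uM].
have small n : exists m, (n <= m)%N /\ `|u m| < M.
  apply: contrapT => /forallNP um; apply: uM; exists n => // m nm.
  by rewrite /= leNgt; apply/negP => umM; apply: (um m).
have [psi /all_and2[npsi upsi]] := choice small.
have psi_oo : psi @ \oo --> \oo := cvgn_oo_ge_id _ npsi.
have M0 : 0 < M by apply: le_lt_trans (upsi 0%N).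
have uK : \forall n \near \oo, closed_ball (0 : R * R) M (u (psi n)).
  by apply: nearW => n; rewrite closed_ballE // /closed_ball_ /= sub0r normrN ltW.
have [p [_ up]] := closed_ball_compact_pair 0 M M0 (u \o psi @ \oo) _ uK.
have [phi phi_oo uphi] := cluster_subseq _ _ up.
by exists p, (psi \o phi); split => //; exact: cvg_comp phi_oo psi_oo.
Qed.

End plane_sequences.

Section coordinates.
Context {R : realType}.

Lemma norm_fst_le (v : R * R) : `|v.1| <= `|v|.
Proof. by rewrite [X in _ <= X]prod_normE le_max lexx. Qed.

Lemma norm_snd_le (v : R * R) : `|v.2| <= `|v|.
Proof. by rewrite [X in _ <= X]prod_normE le_max lexx orbT. Qed.

Lemma fst_cvg {T} {F : set_system T} {FF : Filter F} {q : T -> R * R} {l : R * R} :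
  q @ F --> l -> (fun t => (q t).1) @ F --> l.1.
Proof. by move=> ql; apply: cvg_comp ql _; exact: cvg_fst. Qed.

Lemma snd_cvg {T} {F : set_system T} {FF : Filter F} {q : T -> R * R} {l : R * R} :
  q @ F --> l -> (fun t => (q t).2) @ F --> l.2.
Proof. by move=> ql; apply: cvg_comp ql _; exact: cvg_snd. Qed.

Lemma is_derive_fst (g : R -> R * R) (t : R) (d : R * R) :
  is_derive t 1 g d -> is_derive t 1 (fun s => (g s).1) d.1.
Proof.
move=> [dg dv]; rewrite /derive in dv; have := fst_cvg dg; rewrite dv => d1.
by apply: DeriveDef; [apply/cvg_ex; exists d.1 | apply: norm_cvg_lim]; exact: d1.
Qed.

Lemma is_derive_snd (g : R -> R * R) (t : R) (d : R * R) :
  is_derive t 1 g d -> is_derive t 1 (fun s => (g s).2) d.2.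
Proof.
move=> [dg dv]; rewrite /derive in dv; have := snd_cvg dg; rewrite dv => d2.
by apply: DeriveDef; [apply/cvg_ex; exists d.2 | apply: norm_cvg_lim]; exact: d2.
Qed.

Lemma is_derive_slice_e1 (f : R * R -> R * R) (p : R * R) : derivable f p e1 ->
  is_derive p.1 1 (fun s => f (s, p.2)) ('D_e1 f p).
Proof.
have E : (fun h : R =>
      h^-1 *: (((fun s => f (s, p.2)) \o shift p.1) (h *: 1) - f (p.1, p.2))) =
    (fun h : R => h^-1 *: ((f \o shift p) (h *: e1) - f p)).
  apply: funext => h /=; rewrite -surjective_pairing; congr (_ *: (f _ - _)).
  by rewrite /e1 [RHS]surjective_pairing /= scaler0 add0r.
by move=> dp; apply: DeriveDef; rewrite /derivable /derive E.
Qed.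

Lemma is_derive_slice_e2 (f : R * R -> R * R) (p : R * R) : derivable f p e2 ->
  is_derive p.2 1 (fun s => f (p.1, s)) ('D_e2 f p).
Proof.
have E : (fun h : R =>
      h^-1 *: (((fun s => f (p.1, s)) \o shift p.2) (h *: 1) - f (p.1, p.2))) =
    (fun h : R => h^-1 *: ((f \o shift p) (h *: e2) - f p)).
  apply: funext => h /=; rewrite -surjective_pairing; congr (_ *: (f _ - _)).
  by rewrite /e2 [RHS]surjective_pairing /= scaler0 add0r.
by move=> dp; apply: DeriveDef; rewrite /derivable /derive E.
Qed.

End coordinates.

Section mean_value.
Context {R : realType}.

Lemma mvt_deviation_le (phi dphi : R -> R) (a b c K : R) : a <= b ->
  (forall t, a <= t <= b -> is_derive t 1 phi (dphi t)) ->
  (forall t, a <= t <= b -> `|dphi t - c| <= K) ->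
  `|phi b - phi a - (b - a) * c| <= K * `|b - a|.
Proof.
move=> ab phid phiK; pose psi := phi - c \*: id.
have psid t : a <= t <= b -> is_derive t 1 psi (dphi t - c).
  by move=> /phid phit; apply: is_derive_eq; rewrite /= scaler1.
have psic : {within `[a, b], continuous psi}.
  apply: derivable_within_continuous => t; rewrite in_itv /= => /psid psit.
  exact: ex_derive.
have [x] := MVT_segment ab (fun t tab => psid t (subset_itv_oo_cc tab)) psic.
rewrite in_itv /= => xab psi_ba.
have psiE t : psi t = phi t - c * t by [].
have -> : phi b - phi a - (b - a) * c = psi b - psi a by rewrite !psiE; ring.
by rewrite psi_ba normrM ler_pM // phiK.
Qed.

Lemma mvt_deviation (phi dphi : R -> R) (a b c K : R) :
  (forall t, `|t - a| <= `|b - a| -> is_derive t 1 phi (dphi t)) ->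
  (forall t, `|t - a| <= `|b - a| -> `|dphi t - c| <= K) ->
  `|phi b - phi a - (b - a) * c| <= K * `|b - a|.
Proof.
move=> phid phiK; have [ab | ba] := leP a b.
  by apply: mvt_deviation_le => // t /andP[ta tb];
    [apply: phid | apply: phiK]; rewrite !ger0_norm ?subr_ge0 //; lra.
rewrite -normrN distrC.
have -> : - (phi b - phi a - (b - a) * c) = phi a - phi b - (a - b) * c by ring.
by apply: mvt_deviation_le; [exact: ltW | |] => t /andP[bt ta];
  [apply: phid | apply: phiK]; rewrite !ler0_norm ?subr_le0 //; lra.
Qed.

Lemma mvt_deviation_pair (g dg : R -> R * R) (a b : R) (c : R * R) (K : R) :
  (forall t, `|t - a| <= `|b - a| -> is_derive t 1 g (dg t)) ->
  (forall t, `|t - a| <= `|b - a| -> `|dg t - c| <= K) ->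
  `|g b - g a - (b - a) *: c| <= K * `|b - a|.
Proof.
move=> gd gK; rewrite [X in X <= _]prod_normE ge_max; apply/andP; split.
- apply: (mvt_deviation (fun t => (g t).1) (fun t => (dg t).1)) => t ta.
    exact/is_derive_fst/gd.
  exact: le_trans (norm_fst_le _) (gK t ta).
- apply: (mvt_deviation (fun t => (g t).2) (fun t => (dg t).2)) => t ta.
    exact/is_derive_snd/gd.
  exact: le_trans (norm_snd_le _) (gK t ta).
Qed.

Lemma is_derive_local_min (g dg : R -> R) (x eta : R) : 0 < eta ->
  (forall s, `|s - x| < eta -> is_derive s 1 g (dg s)) ->
  (forall s, `|s - x| < eta -> g x <= g s) -> dg x = 0.
Proof.
move=> eta0 gd gmin.
have near_x t : t \in `]x - eta, x + eta[ -> `|t - x| < eta.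
  by rewrite in_itv /= ltr_distl.
have dgx : is_derive x 1 g (dg x) by apply: gd; rewrite subrr normr0.
have dg0 : is_derive x 1 g 0.
  apply: (@derive1_at_min _ g (x - eta) (x + eta)).
  - lra.
  - by move=> t /near_x /gd [].
  - by rewrite in_itv /=; apply/andP; split; lra.
  - by move=> t /near_x /gmin.
by case: dgx => _ <-; case: dg0.
Qed.

End mean_value.

Section plane_algebra.
Context {R : realType}.
Implicit Types (a b h v w : R * R).

Definition det2 (d1 d2 : R * R) : R := d1.1 * d2.2 - d2.1 * d1.2.

Lemma norm_lin2_le h (d1 d2 : R * R) :
  `|h.1 *: d1 + h.2 *: d2| <= `|h| * (`|d1| + `|d2|).
Proof.
rewrite mulrDr; apply: le_trans (ler_normD _ _) _; rewrite !normrZ.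
apply: lerD; apply: ler_wpM2r => //.
- exact: norm_fst_le.
- exact: norm_snd_le.
Qed.

Lemma det2_lower_bound (d1 d2 : R * R) : det2 d1 d2 != 0 ->
  exists2 c, 0 < c & forall h, c * `|h| <= `|h.1 *: d1 + h.2 *: d2|.
Proof.
case: d1 d2 => [p q] [r s] det0.
set S := `|p| + `|q| + `|r| + `|s| + 1.
have S0 : 0 < S by rewrite ltr_pwDr // !addr_ge0.
exists (`|det2 (p, q) (r, s)| / S) => [|[a b]]; first by rewrite divr_gt0 // normr_gt0.
rewrite /det2 /=; set u1 := a * p + b * r; set u2 := a * q + b * s.
have -> : a *: (p, q) + b *: (r, s) = (u1, u2) by [].
set m := `|(u1, u2)|.
have m1 : `|u1| <= m := norm_fst_le (u1, u2).
have m2 : `|u2| <= m := norm_snd_le (u1, u2).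
have m0 : 0 <= m := normr_ge0 _.
rewrite mulrAC ler_pdivrMr // prod_normE maxr_pMr // ge_max -!normrM /=.
have -> : (p * s - r * q) * a = u1 * s - u2 * r by rewrite /u1 /u2; ring.
have -> : (p * s - r * q) * b = u2 * p - u1 * q by rewrite /u1 /u2; ring.
apply/andP; split; apply: le_trans (ler_normB _ _) _; rewrite !normrM.
- have := ler_wpM2r (normr_ge0 s) m1; have := ler_wpM2r (normr_ge0 r) m2.
  by have := normr_ge0 p; have := normr_ge0 q; rewrite /S; nra.
- have := ler_wpM2r (normr_ge0 p) m2; have := ler_wpM2r (normr_ge0 q) m1.
  by have := normr_ge0 r; have := normr_ge0 s; rewrite /S; nra.
Qed.

Lemma det2_orthogonal_eq0 v (d1 d2 : R * R) : det2 d1 d2 != 0 ->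
  v.1 * d1.1 + v.2 * d1.2 = 0 -> v.1 * d2.1 + v.2 * d2.2 = 0 -> v = 0.
Proof.
move=> det0 vd1 vd2.
have vdet1 : v.1 * det2 d1 d2 =
    d2.2 * (v.1 * d1.1 + v.2 * d1.2) - d1.2 * (v.1 * d2.1 + v.2 * d2.2).
  by rewrite /det2; ring.
have vdet2 : v.2 * det2 d1 d2 =
    d1.1 * (v.1 * d2.1 + v.2 * d2.2) - d2.1 * (v.1 * d1.1 + v.2 * d1.2).
  by rewrite /det2; ring.
rewrite vd1 vd2 !mulr0 subrr in vdet1 vdet2.
move: vdet1 vdet2 => /eqP; rewrite mulf_eq0 (negbTE det0) orbF => /eqP v1.
move=> /eqP; rewrite mulf_eq0 (negbTE det0) orbF => /eqP v2.
by rewrite [v]surjective_pairing v1 v2.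
Qed.

(* The norm of [R * R] is the sup norm, which is not differentiable; the
   minimisation argument uses the squared Euclidean norm instead. *)
Definition sqnorm2 v : R := v.1 ^+ 2 + v.2 ^+ 2.

Lemma sqnorm2_lt a b : 2 * `|b| < `|a| -> sqnorm2 b < sqnorm2 a.
Proof.
have sq_bounds v : `|v| ^+ 2 <= sqnorm2 v /\ sqnorm2 v <= 2 * `|v| ^+ 2.
  have v1 := norm_fst_le v; have v2 := norm_snd_le v.
  have /orP v12 : (`|v| <= `|v.1|) || (`|v| <= `|v.2|) by rewrite -le_max -prod_normE.
  rewrite /sqnorm2 -(real_normK (num_real v.1)) -(real_normK (num_real v.2)).
  have := normr_ge0 v.1; have := normr_ge0 v.2.
  by case: v12 => ? ? ?; split; nra.
move=> ba; have [+ _] := sq_bounds a; have [_ +] := sq_bounds b.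
by have := normr_ge0 b; nra.
Qed.

Lemma sqnorm2_sub_continuous w : continuous (fun v => sqnorm2 (v - w)).
Proof.
move=> v; have v_w : (fun y => y - w) @ v --> v - w.
  by apply: cvgB; [exact: cvg_id | exact: cvg_cst].
by apply: cvgD; apply: cvgM; [exact: fst_cvg v_w | exact: fst_cvg v_w |
  exact: snd_cvg v_w | exact: snd_cvg v_w].
Qed.

Lemma is_derive_sqnorm2_sub (g : R -> R * R) (s : R) (d : R * R) w :
  is_derive s 1 g d ->
  is_derive s 1 (fun t => sqnorm2 (g t - w))
    (2 * ((g s - w).1 * d.1 + (g s - w).2 * d.2)).
Proof.
move=> gd; pose g1 := (fun t => (g t).1) - cst w.1.
pose g2 := (fun t => (g t).2) - cst w.2.
have d1 : is_derive s 1 g1 (d.1 - 0) by apply: is_deriveB; exact: is_derive_fst.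
have d2 : is_derive s 1 g2 (d.2 - 0) by apply: is_deriveB; exact: is_derive_snd.
have -> : (fun t => sqnorm2 (g t - w)) = g1 * g1 + g2 * g2.
  by apply: funext => t; rewrite /sqnorm2 !expr2.
have := is_deriveD (is_deriveM d1 d1) (is_deriveM d2 d2).
rewrite !subr0 => g12; apply: is_derive_eq.
by rewrite /g1 /g2 !fctE /GRing.scale /=; ring.
Qed.

End plane_algebra.

Definition tangent {R : realType} (f : R * R -> R * R) (z h : R * R) : R * R :=
  h.1 *: 'D_e1 f z + h.2 *: 'D_e2 f z.

Section C1_maps.
Context {R : realType} {D : set (R * R)} {f : R * R -> R * R}.
Hypotheses (oD : open D) (hf : C1_on D f).

Lemma C1_on_partials_cvg {z} : D z ->
  (fun y => 'D_e1 f y) @ z --> 'D_e1 f z /\ (fun y => 'D_e2 f y) @ z --> 'D_e2 f z.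
Proof.
move=> /mem_set Dz; have [_ [c1 c2]] := hf.
rewrite continuous_open_subspace // in c1; rewrite continuous_open_subspace // in c2.
by split; [exact: c1 z Dz | exact: c2 z Dz].
Qed.

Lemma C1_on_tangent_approx {z e} : D z -> 0 < e ->
  exists2 r, 0 < r & forall y, `|y - z| < r ->
    D y /\ `|f y - f z - tangent f z (y - z)| <= e * `|y - z|.
Proof.
move=> Dz e0; have e20 : 0 < e / 2 by rewrite divr_gt0.
have [d1z d2z] := C1_on_partials_cvg Dz.
have n1 : \forall y \near z, `|'D_e1 f z - 'D_e1 f y| <= e / 2.
  by move/cvgrPdist_le : d1z; apply.
have n2 : \forall y \near z, `|'D_e2 f z - 'D_e2 f y| <= e / 2.
  by move/cvgrPdist_le : d2z; apply.
have nD : \forall y \near z, D y by apply: open_nbhs_nbhs.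
have [r r0 zr] := (nbhs_normP _ _).1 (filterI nD (filterI n1 n2)).
exists r => // y yz.
have corner t s : `|t - z.1| <= `|y.1 - z.1| -> `|s - z.2| <= `|y.2 - z.2| ->
    [/\ D (t, s), `|'D_e1 f (t, s) - 'D_e1 f z| <= e / 2
      & `|'D_e2 f (t, s) - 'D_e2 f z| <= e / 2].
  move=> tz sz; have [|Dts [ts1 ts2]] := zr (t, s).
    apply: le_lt_trans yz.
    rewrite /= distrC [X in X <= _]prod_normE [X in _ <= X]prod_normE ge_max !le_max.
    by rewrite tz sz orbT.
  by split; [exact: Dts | rewrite distrC; exact: ts1 | rewrite distrC; exact: ts2].
have [Dy _ _] := corner y.1 y.2 (lexx _) (lexx _).
rewrite -surjective_pairing in Dy; split; first exact: Dy.
(* Go from z to y through the corner (z.1, y.2), one coordinate at a time. *)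
have z11 : `|z.1 - z.1| <= `|y.1 - z.1| by rewrite subrr normr0.
have dev1 : `|f (y.1, y.2) - f (z.1, y.2) - (y.1 - z.1) *: 'D_e1 f z|
    <= e / 2 * `|y.1 - z.1|.
  apply: (mvt_deviation_pair (fun s => f (s, y.2)) (fun s => 'D_e1 f (s, y.2))) => t tz.
  - have [Dt _ _] := corner t y.2 tz (lexx _).
    exact: is_derive_slice_e1 (t, y.2) (hf.1 _ Dt).1.
  - have [_ D1t _] := corner t y.2 tz (lexx _); exact: D1t.
have dev2 : `|f (z.1, y.2) - f (z.1, z.2) - (y.2 - z.2) *: 'D_e2 f z|
    <= e / 2 * `|y.2 - z.2|.
  apply: (mvt_deviation_pair (fun s => f (z.1, s)) (fun s => 'D_e2 f (z.1, s))) => t tz.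
  - have [Dt _ _] := corner z.1 t z11 tz.
    exact: is_derive_slice_e2 (z.1, t) (hf.1 _ Dt).2.
  - have [_ _ D2t] := corner z.1 t z11 tz; exact: D2t.
have split_diff (u v c a b : R * R) (s t : R) :
    u - v - (s *: a + t *: b) = (u - c - s *: a) + (c - v - t *: b).
  by apply: injective_projections => /=; ring.
rewrite -!surjective_pairing in dev1 dev2.
rewrite /tangent (split_diff _ _ (f (z.1, y.2))).
apply: le_trans (ler_normD _ _) _; apply: le_trans (lerD dev1 dev2) _.
have y1z : `|y.1 - z.1| <= `|y - z| := norm_fst_le (y - z).
have y2z : `|y.2 - z.2| <= `|y - z| := norm_snd_le (y - z).
rewrite [X in _ <= X * _]splitr mulrDl.
by apply: lerD; apply: ler_wpM2l;
  [exact: ltW e20 | exact: y1z | exact: ltW e20 | exact: y2z].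
Unshelve. all: end_near. Qed.

Lemma C1_on_cvg {z} : D z -> f @ z --> f z.
Proof.
move=> Dz; have [r r0 approx] := C1_on_tangent_approx Dz ltr01.
pose M := `|'D_e1 f z| + `|'D_e2 f z| + 1.
have M0 : 0 < M by rewrite ltr_pwDr // addr_ge0.
apply/cvgrPdist_lt => e e0; near=> y.
have : ball z (Num.min r (e / M)) y.
  by near: y; apply: (nbhsx_ballx z); rewrite lt_min r0 divr_gt0.
rewrite -ball_normE /= distrC lt_min ltr_pdivlMr // => /andP[yr ye]; rewrite distrC.
have [_] := approx y yr; rewrite mul1r => err.
rewrite -(subrK (tangent f z (y - z)) (f y - f z)).
apply: le_lt_trans (ler_normD _ _) _.
apply: le_lt_trans (lerD err (norm_lin2_le (y - z) _ _)) _.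
by rewrite -[X in X + _]mulr1 -mulrDr [1 + _]addrC.
Unshelve. all: end_near. Qed.

Lemma C1_on_jacobian_cvg {z} : D z -> Defs.jacobian f @ z --> Defs.jacobian f z.
Proof.
move=> /C1_on_partials_cvg[d1 d2]; rewrite /Defs.jacobian.
by apply: cvgB; apply: cvgM;
  [exact: fst_cvg d1 | exact: snd_cvg d2 | exact: fst_cvg d2 | exact: snd_cvg d1].
Qed.

Lemma C1_on_expanding {z} : D z -> Defs.jacobian f z != 0 ->
  exists2 c, 0 < c & exists2 r, 0 < r &
    forall y, `|y - z| < r -> D y /\ c * `|y - z| <= `|f y - f z|.
Proof.
move=> Dz Jz; have [c c0 Tc] := det2_lower_bound ('D_e1 f z) ('D_e2 f z) Jz.
have c20 : 0 < c / 2 by rewrite divr_gt0.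
have [r r0 approx] := C1_on_tangent_approx Dz c20.
exists (c / 2) => //.
exists r => // y yz; have [Dy err] := approx y yz; split => //.
have Ty : c * `|y - z| <= `|tangent f z (y - z)| := Tc (y - z).
have := ler_normB (f y - f z) (f y - f z - tangent f z (y - z)); rewrite subKr.
by lra.
Qed.

Lemma C1_on_sqnorm2_min_eq {x w} : D x -> Defs.jacobian f x != 0 ->
  (\forall y \near x, sqnorm2 (f x - w) <= sqnorm2 (f y - w)) -> f x = w.
Proof.
move=> Dx Jx xmin; have xD : nbhs x D by apply: open_nbhs_nbhs.
have [eta eta0 xeta] := (nbhs_normP _ _).1 (filterI xD xmin).
have slice1 s : `|s - x.1| < eta ->
    D (s, x.2) /\ sqnorm2 (f x - w) <= sqnorm2 (f (s, x.2) - w).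
  move=> sx; apply: xeta.
  by rewrite /ball_ /= prod_normE gt_max /= subrr normr0 eta0 andbT distrC.
have slice2 s : `|s - x.2| < eta ->
    D (x.1, s) /\ sqnorm2 (f x - w) <= sqnorm2 (f (x.1, s) - w).
  move=> sx; apply: xeta.
  by rewrite /ball_ /= prod_normE gt_max /= subrr normr0 eta0 distrC.
pose dg1 s := 2 * ((f (s, x.2) - w).1 * ('D_e1 f (s, x.2)).1 +
                   (f (s, x.2) - w).2 * ('D_e1 f (s, x.2)).2).
pose dg2 s := 2 * ((f (x.1, s) - w).1 * ('D_e2 f (x.1, s)).1 +
                   (f (x.1, s) - w).2 * ('D_e2 f (x.1, s)).2).
have : dg1 x.1 = 0.
  apply: (is_derive_local_min (fun s => sqnorm2 (f (s, x.2) - w)) dg1 x.1 eta eta0);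
    move=> s /slice1[Ds min_s]; last by rewrite -surjective_pairing.
  by apply: is_derive_sqnorm2_sub; exact: is_derive_slice_e1 (s, x.2) (hf.1 _ Ds).1.
rewrite /dg1 -surjective_pairing => /eqP; rewrite mulf_eq0 pnatr_eq0 /= => /eqP grad1.
have : dg2 x.2 = 0.
  apply: (is_derive_local_min (fun s => sqnorm2 (f (x.1, s) - w)) dg2 x.2 eta eta0);
    move=> s /slice2[Ds min_s]; last by rewrite -surjective_pairing.
  by apply: is_derive_sqnorm2_sub; exact: is_derive_slice_e2 (x.1, s) (hf.1 _ Ds).2.
rewrite /dg2 -surjective_pairing => /eqP; rewrite mulf_eq0 pnatr_eq0 /= => /eqP grad2.
exact: subr0_eq (det2_orthogonal_eq0 (f x - w) ('D_e1 f x) ('D_e2 f x) Jx grad1 grad2).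
Qed.

Lemma C1_on_nbhs_image {z N} : D z -> Defs.jacobian f z != 0 ->
  nbhs z N -> nbhs (f z) (f @` N).
Proof.
move=> Dz Jz zN; have [c c0 [r1 r10 expand]] := C1_on_expanding Dz Jz.
have zJ : \forall y \near z, Defs.jacobian f y != 0.
  exact: cvgr_neq0 _ (C1_on_jacobian_cvg Dz) Jz.
have [r2 r20 zr2] := (nbhs_normP _ _).1 (filterI zN zJ).
pose rho := Num.min r1 r2 / 2.
have m0 : 0 < Num.min r1 r2 by rewrite lt_min r10.
have m_r1 : Num.min r1 r2 <= r1 by rewrite ge_min lexx.
have m_r2 : Num.min r1 r2 <= r2 by rewrite ge_min lexx orbT.
have rho0 : 0 < rho by rewrite divr_gt0.
have K_near y : `|y - z| <= rho -> [/\ D y, N y & Defs.jacobian f y != 0].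
  move=> yz; have [|Dy _] := expand y; first by rewrite /rho in yz; lra.
  have [|Ny Jy] := zr2 y; first by rewrite /ball_ /= distrC; rewrite /rho in yz; lra.
  by split.
have k0 : 0 < c * rho / 4 by rewrite !divr_gt0 ?mulr_gt0.
apply: filterS (nbhsx_ballx (f z) _ k0) => w; rewrite -ball_normE /= => zw.
pose g y := sqnorm2 (f y - w).
have Kz : closed_ball z rho z := closed_ballxx rho0.
have inK y : closed_ball z rho y <-> `|y - z| <= rho.
  by rewrite closed_ballE // /closed_ball_ /= distrC.
have gc : {within closed_ball z rho, continuous g}.
  apply: continuous_in_subspaceT => y /set_mem /inK /K_near[Dy _ _].
  exact: cvg_comp _ _ (C1_on_cvg Dy) (sqnorm2_sub_continuous w (f y)).
have [x /set_mem Kx xmin] :=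
  compact_EVT_min (ex_intro _ z Kz) (closed_ball_compact_pair z rho rho0) gc.
move/inK : Kx => xz.
(* On the sphere |x - z| = rho, |f x - w| >= 3 c rho / 4 > 2 |f z - w|. *)
have x_int : `|x - z| < rho.
  rewrite lt_neqAle xz andbT; apply/eqP => xz_rho.
  have [_ fxz] := expand x (ltac:(rewrite xz_rho /rho; lra)).
  have := xmin z (mem_set Kz); apply/negP; rewrite -ltNge; apply: sqnorm2_lt.
  have := ler_distD w (f x) (f z); rewrite xz_rho in fxz.
  by rewrite (distrC w (f z)); lra.
have [Dx Nx Jx] := K_near x (ltW x_int).
exists x => //; apply: C1_on_sqnorm2_min_eq => //.
apply/nbhs_normP; exists (rho - `|x - z|); first by rewrite /= subr_gt0.
move=> y; rewrite /ball_ /= => xy; apply: xmin; apply/mem_set/inK.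
by have := ler_distD x y z; rewrite (distrC y x); lra.
Qed.

End C1_maps.

Definition outskirts {R : realType} (D : set (R * R)) (n : nat) (z : R * R) :=
  (exists2 q, ~ D q & `|z - q| < n.+1%:R^-1) \/ n%:R < `|z|.

Section cluster_set.
Context {R : realType} {D : set (R * R)} {f : R * R -> R * R}.
Hypotheses (oD : open D) (fcont : forall z, D z -> f @ z --> f z).

Lemma clusterset_outskirts w n e : clusterset D f w -> 0 < e ->
  exists z, [/\ D z, outskirts D n z & `|f z - w| < e].
Proof.
move=> [z [Dz [zesc fzw]]] e0.
have fzw_near : \forall k \near \oo, `|f (z k) - w| < e.
  by move/cvgrPdist_lt : fzw => /(_ e e0); apply: filterS => k; rewrite distrC.
case: zesc => [[p [_ [Dp zp]]] | zoo].
- have zp_near : \forall k \near \oo, `|z k - p| < n.+1%:R^-1.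
    move/cvgrPdist_lt : zp => /(_ _ (harmonic_gt0 n)).
    by apply: filterS => k; rewrite distrC.
  have [k [fzk zpk]] := filter_ex (filterI fzw_near zp_near).
  by exists (z k); split => //; left; exists p.
- have [k [fzk zk]] := filter_ex (filterI fzw_near ((cvgryPgt _).1 zoo n%:R)).
  by exists (z k); split => //; right.
Qed.

Lemma outskirts_subseq_notin (z : nat -> R * R) (phi : nat -> nat) p :
  (forall n, outskirts D n (z n)) -> phi @ \oo --> \oo -> z \o phi @ \oo --> p ->
  ~ D p.
Proof.
move=> zout phi_oo zp Dp.
have /nbhs_ballP[r r0 pD] : nbhs p D by apply: open_nbhs_nbhs; split.
have r20 : 0 < r / 2 by rewrite divr_gt0.
near \oo => k.
have zpk : `|z (phi k) - p| < r / 2.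
  near: k; move/cvgrPdist_lt : zp => /(_ _ r20); apply: filterS => k.
  by rewrite distrC.
case: (zout (phi k)) => [[q Dq zq] | zbig].
- have zqr : `|z (phi k) - q| < r / 2.
    apply: lt_trans zq _; near: k.
    exact: phi_oo _ (near_infty_natSinv_lt (PosNum r20)).
  apply: Dq; apply: pD; rewrite -ball_normE /=.
  have := ler_distD (z (phi k)) p q; rewrite (distrC p (z (phi k))); lra.
- have pr_k : `|p| + r < (phi k)%:R by near: k; exact: phi_oo _ (nbhs_infty_gtr _).
  by have := ler_distD p (z (phi k)) 0; rewrite !subr0; lra.
Unshelve. all: end_near. Qed.

Lemma clusterset_or_attained (z : nat -> R * R) w :
  (forall n, D (z n)) -> f \o z @ \oo --> w ->
  clusterset D f w \/
  exists p phi, [/\ D p, f p = w, phi @ \oo --> \oo & z \o phi @ \oo --> p].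
Proof.
move=> Dz fzw.
have [zoo | /not_cvgy_subseq[p [phi [phi_oo zp]]]] :=
  pselect ((fun n => `|z n|) @ \oo --> +oo).
  by left; exists z; split => //; split => //; right.
have fzpw : f \o (z \o phi) @ \oo --> w := cvg_comp _ _ phi_oo fzw.
have [Dp | nDp] := pselect (D p).
  right; exists p, phi; split => //.
  have fzpp := cvg_comp _ _ zp (fcont p Dp).
  exact: (cvg_unique (@norm_hausdorff R (R * R)%type) fzpp fzpw).
left; exists (z \o phi); split; [by move=> n; apply: Dz | split => //].
left; exists p; split; last by split.
apply: (closed_cvg _ (@closed_closure _ D) _ _ zp); apply: nearW => n.
exact/subset_closure/Dz.
Qed.

End cluster_set.

Definition exceptional {R : realType} (D : set (R * R)) (f : R * R -> R * R) :=
  f @` critset D f `|` clusterset D f.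

Section exceptional_set.
Context {R : realType} {D : set (R * R)} {f : R * R -> R * R}.
Hypotheses (oD : open D) (hf : C1_on D f).

Let fcont z : D z -> f @ z --> f z := C1_on_cvg oD hf.

Lemma closure_image_critset : closure (f @` critset D f) `<=` exceptional D f.
Proof.
move=> w /closure_image_cvg[z [Sz fzw]].
have [|[p [phi [Dp fpw phi_oo zp]]]] :=
  clusterset_or_attained fcont _ _ (fun n => (Sz n).1) fzw; first by right.
left; exists p => //; split => //.
have Jzphi : Defs.jacobian f \o (z \o phi) = cst 0.
  by apply/funext => n; exact: (Sz _).2.
have := cvg_comp _ _ zp (C1_on_jacobian_cvg oD hf Dp); rewrite Jzphi => J0.
exact: (cvg_unique (@norm_hausdorff R R) J0 (cvg_cst 0)).
Qed.

Lemma closed_clusterset : closed (clusterset D f).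
Proof.
move=> w clw.
have near_w n : exists z, [/\ D z, outskirts D n z & `|f z - w| < n.+1%:R^-1].
  have e0 : 0 < n.+1%:R^-1 / 2 :> R by rewrite divr_gt0.
  have [u [Cu wu]] := clw _ (nbhsx_ballx w _ e0).
  have [z [Dz zout fzu]] := clusterset_outskirts _ n _ Cu e0.
  exists z; split => //; move: wu; rewrite -ball_normE /= => wu.
  apply: le_lt_trans (ler_distD u (f z) w) _.
  rewrite (distrC u w) [X in _ < X]splitr.
  exact: ltrD fzu wu.
have [z /all_and3[Dz zout fzw]] := choice near_w.
have [//|[p [phi [Dp _ phi_oo zp]]]] :=
  clusterset_or_attained fcont z w Dz (cvg_natSinv (f \o z) w fzw).
by case: (outskirts_subseq_notin oD _ _ _ zout phi_oo zp).
Qed.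

Lemma closed_exceptional : closed (exceptional D f).
Proof.
move=> w; rewrite closureU => -[/closure_image_critset // | /closed_clusterset Cw].
by right.
Qed.

Lemma open_image_noncritical (A : set (R * R)) :
  open A -> A `<=` D `\` critset D f -> open (f @` A).
Proof.
move=> oA AD; rewrite openE => _ [z Az <-]; have [Dz nSz] := AD z Az.
have Jz : Defs.jacobian f z != 0 by apply/eqP => J0; apply: nSz.
have zA : nbhs z A by apply: open_nbhs_nbhs.
have fzA := C1_on_nbhs_image oD hf Dz Jz zA; exact: fzA.
Qed.

Local Notation U := (D `\` f @^-1` exceptional D f).

Lemma closure_image_component_notin z0 w : ~ exceptional D f w ->
  closure (f @` connected_component U z0) w -> (f @` connected_component U z0) w.
Proof.
move=> Bw /closure_image_cvg[z [Cz fzw]].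
have Dz n : D (z n) by have [] := connected_component_sub (Cz n).
have [Cw|[p [phi [Dp fpw phi_oo zp]]]] := clusterset_or_attained fcont z w Dz fzw.
  by case: Bw; right.
exists p => //; apply: connected_component_closure.
- exact: open_setD_preimage _ _ _ oD fcont closed_exceptional.
- by split => //; rewrite /preimage /= fpw.
- apply: (closed_cvg _ (@closed_closure _ _) _ _ zp); apply: nearW => n.
  exact/subset_closure/Cz.
Qed.

End exceptional_set.

Theorem theorem3p10 (R : realType) (D : set (R * R)) (f : R * R -> R * R)
  (hD : open D) (hf : C1_on D f) (z0 : R * R) :
  let B := f @` critset D f `|` clusterset D f in
  (D `\` f @^-1` B) z0 ->
  f @` connected_component (D `\` f @^-1` B) z0 =
  connected_component (~` B) (f z0).
Proof.
move=> B Uz0; have fcont z : D z -> f @ z --> f z := C1_on_cvg hD hf.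
have oU : open (D `\` f @^-1` B).
  exact: open_setD_preimage _ _ _ hD fcont (closed_exceptional hD hf).
apply/seteqP; split.
- apply: connected_component_max.
  + by exists z0 => //; exact: connected_component_refl.
  + by move=> _ [z /connected_component_sub[_ nBz] <-].
  + apply: connected_continuous_connected; first exact: component_connected.
    apply: continuous_in_subspaceT => z /set_mem /connected_component_sub[Dz _].
    exact: fcont.
- apply: connected_sub_relclopen; first exact: component_connected.
  + exists (f z0); split; first exact: connected_component_refl Uz0.2.
    by exists z0 => //; exact: connected_component_refl.
  + apply: open_image_noncritical hD hf _ (open_connected_component _ _ oU) _.
    move=> z /connected_component_sub[Dz nBz]; split => // Sz.
    by apply: nBz; left; exists z.
  + move=> w [/connected_component_sub Bw].
    exact: closure_image_component_notin hD hf z0 w Bw.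
Qed.
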